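(* Let $0<q<1$ and let $\rho_-=(\pi_+-\pi_-)/2:\mathcal{A}(S^2_q)\to\mathcal{B}(\hat{\mathcal{H}})$. Then $\rho_-$ maps $\mathcal{A}(S^2_q)$ into rapid decay matrices on $\hat{\mathcal{H}}$. Consequently, writing $\pi=\rho_+\otimes\mathrm{id}_{\mathbb{C}^2}+\rho_-\otimes\gamma$ on $\mathcal{H}=\hat{\mathcal{H}}\otimes\mathbb{C}^2$ with $\rho_+=(\pi_++\pi_-)/2$, $\gamma=\begin{pmatrix}1&0\\0&-1\end{pmatrix}$, $F=\begin{pmatrix}0&1\\1&0\end{pmatrix}$, one has $[F,\pi(x)]=2\rho_-(x)\otimes F\gamma$, which is trace class for all $x\in\mathcal{A}(S^2_q)$, and the Fredholm module $(\mathcal{H},F)$ over $\mathcal{A}(S^2_q)$ is finite summable.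
   Context: $\mathcal{A}(S^2_q)$ is the unital $*$-algebra generated by $a,a^*$ and $b=b^*$ with $ba=q^2ab$, $a^*a+b^2=1$, $q^4aa^*+b^2=q^4$. $\hat{\mathcal{H}}$ has orthonormal basis $|l,m\rangle$, $l\in\mathbb{N}+\tfrac12$, $m=-l,\dots,l$ (out-of-range vectors are $0$). With $[x]=(q^x-q^{-x})/(q-q^{-1})$, the representations $\pi_\pm$ on $\hat{\mathcal{H}}$ are: $\pi_\pm(a)|l,m\rangle=q^{m-l-\frac12}\frac{\sqrt{[l+m+1][l+m+2]}}{[2l+2]}|l+1,m+1\rangle-q^{m+l+\frac12}\frac{\sqrt{[l-m-1][l-m]}}{[2l]}|l-1,m+1\rangle\pm\frac{(1+q^2)q^{m-\frac12}}{[2l][2l+2]}\sqrt{[l+m+1][l-m]}\,|l,m+1\rangle$, $\pi_\pm(b)|l,m\rangle=-q^{m+1}\frac{\sqrt{[l+m+1][l-m+1]}}{[2l+2]}|l+1,m\rangle-q^{m+1}\frac{\sqrt{[l+m][l-m]}}{[2l]}|l-1,m\rangle\pm\frac{[l-m+1][l+m]-q^2[l-m][l+m+1]}{[2l][2l+2]}|l,m\rangle$. An operator $T$ on $\hat{\mathcal{H}}$ is a rapid decay matrix if $\sup|\langle l,m|T|l',m'\rangle|(l+l'+1)^p<\infty$ for all $p\in\mathbb{N}$. A Fredholm module $(\mathcal{H},F)$ is finite summable if for some $k$, $[F,x_0]\cdots[F,x_k]$ is trace class for all $x_j$ in the algebra. *)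

From Stdlib Require Import Reals Lra List ZArith.
From Coquelicot Require Import Coquelicot.
Import ListNotations.
Open Scope R_scope.

(** An operator is given by the (finite) expansion of
    the image of every basis vector: [T j = [(i1,c1);...]] means
    T|j> = sum c_k |i_k>. *)
Definition op (I : Type) := I -> list (I * C).

Section Ops.
Context {I : Type} (eqd : forall x y : I, {x = y} + {x <> y}).

Definition entry (T : op I) (i j : I) : C :=
  fold_right Cplus (RtoC 0)
    (map (fun p => if eqd (fst p) i then snd p else RtoC 0) (T j)).
End Ops.

Definition op_id {I} : op I := fun j => [(j, RtoC 1)].
Definition op_add {I} (S T : op I) : op I := fun j => S j ++ T j.
Definition op_scal {I} (c : C) (T : op I) : op I :=
  fun j => map (fun p => (fst p, Cmult c (snd p))) (T j).
Definition op_comp {I} (S T : op I) : op I :=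
  fun j => flat_map (fun p => map (fun r => (fst r, Cmult (snd p) (snd r)))
                                  (S (fst p))) (T j).
Definition op_comm {I} (S T : op I) : op I :=
  op_add (op_comp S T) (op_scal (RtoC (-1)) (op_comp T S)).
Definition op_tensor {I J} (A : op I) (B : op J) : op (I * J) :=
  fun jt => flat_map (fun p => map (fun r => ((fst p, fst r), Cmult (snd p) (snd r)))
                                   (B (snd jt))) (A (fst jt)).

(** * Basis of \hat H : |l,m>, l = n + 1/2 (n : nat), m = k + 1/2 (k : Z),
      with -l <= m <= l, i.e. -n-1 <= k <= n. *)
Definition idx := (nat * Z)%type.
Definition idx_eq_dec : forall x y : idx, {x = y} + {x <> y}.
Proof. decide equality; [apply Z.eq_dec | apply Nat.eq_dec]. Defined.
Definition validb (i : idx) : bool :=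
  (Z.leb (- Z.of_nat (fst i) - 1) (snd i) && Z.leb (snd i) (Z.of_nat (fst i)))%bool.
Definition lval (i : idx) : R := INR (fst i) + /2.
Definition mval (i : idx) : R := IZR (snd i) + /2.
Definition block (n : nat) : list idx :=
  map (fun j => (n, (Z.of_nat j - Z.of_nat n - 1)%Z)) (seq 0 (2 * n + 2)).

Definition qn (q x : R) : R := (Rpower q x - Rpower q (- x)) / (q - / q).

(** sign s = true for pi_+, false for pi_- *)
Definition sgn (s : bool) : R := if s then 1 else -1.

Section Gens.
Variable q : R.
Let br := qn q.

(** pi_s(a)|l,m> as a list of (target, coefficient) before dropping
    out-of-range vectors *)
Definition col_a_raw (s : bool) (j : idx) : list (idx * R) :=
  let l := lval j in let m := mval j in
  let n := fst j in let k := snd j in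
  [((S n, (k + 1)%Z),
     Rpower q (m - l - /2) * sqrt (br (l + m + 1) * br (l + m + 2)) / br (2 * l + 2))]
  ++ (match n with
      | O => []
      | S n' => [((n', (k + 1)%Z),
                  - (Rpower q (m + l + /2) * sqrt (br (l - m - 1) * br (l - m)) / br (2 * l)))]
      end)
  ++ [((n, (k + 1)%Z),
       sgn s * ((1 + q ^ 2) * Rpower q (m - /2) / (br (2 * l) * br (2 * l + 2))
                * sqrt (br (l + m + 1) * br (l - m))))].

Definition col_b_raw (s : bool) (j : idx) : list (idx * R) :=
  let l := lval j in let m := mval j in
  let n := fst j in let k := snd j in
  [((S n, k), - (Rpower q (m + 1) * sqrt (br (l + m + 1) * br (l - m + 1)) / br (2 * l + 2)))]
  ++ (match n with
      | O => []
      | S n' => [((n', k), - (Rpower q (m + 1) * sqrt (br (l + m) * br (l - m)) / br (2 * l)))]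
      end)
  ++ [((n, k), sgn s * ((br (l - m + 1) * br (l + m) - q ^ 2 * br (l - m) * br (l + m + 1))
                        / (br (2 * l) * br (2 * l + 2))))].

(** out-of-range vectors are 0 *)
Definition keep_valid (v : list (idx * R)) : list (idx * C) :=
  map (fun p => (fst p, RtoC (snd p))) (filter (fun p => validb (fst p)) v).

Definition op_a (s : bool) : op idx := fun j => keep_valid (col_a_raw s j).
Definition op_b (s : bool) : op idx := fun j => keep_valid (col_b_raw s j).

(** pi_s(a^* ) = pi_s(a)^* : <i|pi(a^* )|j> = conj <j|pi(a)|i>, where the only
    i with <j|pi(a)|i> possibly nonzero are (l+1,m-1), (l-1,m-1), (l,m-1). *)
Definition sources_astar (j : idx) : list idx :=
  let n := fst j in let k := snd j in
  [(S n, (k - 1)%Z); (n, (k - 1)%Z)]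
  ++ (match n with O => [] | S n' => [(n', (k - 1)%Z)] end).
Definition op_astar (s : bool) : op idx :=
  fun j => map (fun i => (i, Cconj (entry idx_eq_dec (op_a s) j i)))
               (filter validb (sources_astar j)).
End Gens.

(** * The algebra A(S^2_q): elements are represented by noncommutative
    polynomial expressions in the generators a, a^*, b (the representations
    pi_+- factor through the defining relations). *)
Inductive gen := Ga | Gastar | Gb.
Inductive AS2 : Type :=
| AOne : AS2
| AGen : gen -> AS2
| AScal : C -> AS2 -> AS2
| AAdd : AS2 -> AS2 -> AS2
| AMul : AS2 -> AS2 -> AS2.

Fixpoint interp {I} (g : gen -> op I) (x : AS2) : op I :=
  match x with
  | AOne => op_id
  | AGen h => g h
  | AScal c y => op_scal c (interp g y)
  | AAdd y z => op_add (interp g y) (interp g z)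
  | AMul y z => op_comp (interp g y) (interp g z)
  end.

Definition gen_op (q : R) (s : bool) (g : gen) : op idx :=
  match g with Ga => op_a q s | Gastar => op_astar q s | Gb => op_b q s end.

Definition pi_s (q : R) (s : bool) (x : AS2) : op idx := interp (gen_op q s) x.
Definition rho_plus (q : R) (x : AS2) : op idx :=
  op_scal (RtoC (/2)) (op_add (pi_s q true x) (pi_s q false x)).
Definition rho_minus (q : R) (x : AS2) : op idx :=
  op_scal (RtoC (/2)) (op_add (pi_s q true x) (op_scal (RtoC (-1)) (pi_s q false x))).

Definition rapid_decay (T : op idx) : Prop :=
  forall p : nat, exists M : R, forall i j : idx, validb i = true -> validb j = true ->
    Cmod (entry idx_eq_dec T i j) * (lval i + lval j + 1) ^ p <= M.

(** * H = \hat H (x) C^2, basis |l,m> (x) e_t, t : bool (true = first vector) *)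
Definition idx2 := (idx * bool)%type.
Definition idx2_eq_dec : forall x y : idx2, {x = y} + {x <> y}.
Proof. decide equality; [apply Bool.bool_dec | apply idx_eq_dec]. Defined.
Definition block2 (n : nat) : list idx2 :=
  flat_map (fun i => [(i, true); (i, false)]) (block n).

Definition id2 : op bool := op_id.
Definition gamma2 : op bool := fun t => [(t, RtoC (if t then 1 else -1))].
Definition F2 : op bool := fun t => [(negb t, RtoC 1)].

Definition FH : op idx2 := op_tensor op_id F2.
Definition piH (q : R) (x : AS2) : op idx2 :=
  op_add (op_tensor (rho_plus q x) id2) (op_tensor (rho_minus q x) gamma2).

(** * Trace class operators (nuclear form), on a space whose orthonormal basis
    is the disjoint union of the finite blocks [blk n]:
    T = sum_n u_n <v_n, .> with u_n, v_n in l^2 and sum_n ||u_n|| ||v_n|| < oo. *)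
Section TraceClass.
Context {I : Type} (eqd : forall x y : I, {x = y} + {x <> y}) (blk : nat -> list I).

Definition in_basis (i : I) : Prop := exists n, In i (blk n).
Definition blocknorm2 (u : I -> C) (n : nat) : R :=
  fold_right Rplus 0 (map (fun i => (Cmod (u i)) ^ 2) (blk n)).
Definition in_l2 (u : I -> C) : Prop := ex_series (blocknorm2 u).
Definition l2norm (u : I -> C) : R := sqrt (Series (blocknorm2 u)).

Definition trace_class (T : op I) : Prop :=
  exists u v : nat -> I -> C,
    (forall n, in_l2 (u n)) /\ (forall n, in_l2 (v n)) /\
    ex_series (fun n => l2norm (u n) * l2norm (v n)) /\
    forall i j, in_basis i -> in_basis j ->
      is_series (fun n => Cmult (u n i) (Cconj (v n j))) (entry eqd T i j).
End TraceClass.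

Definition trace_class_H (T : op idx2) : Prop := trace_class idx2_eq_dec block2 T.

Definition comm_prod (q : R) (xs : list AS2) : op idx2 :=
  fold_right (fun x acc => op_comp (op_comm FH (piH q x)) acc) op_id xs.

Definition finite_summable (q : R) : Prop :=
  exists k : nat, forall xs : list AS2, length xs = S k ->
    trace_class_H (comm_prod q xs).

(* The coefficients of [pi_+] and [pi_-] on the generators are uniformly
   bounded, change [l] by at most one, and differ only in the diagonal terms,
   which are [O(q ^ l)] because the q-number [[x]] grows like [q ^ (-x)].
   These properties survive sums and products (the band condition lets the
   [q ^ l] decay of one factor absorb the bounded shift of [l] made by the
   other), so for every [x] the matrix of [rho_-(x) = (pi_+(x) - pi_-(x)) / 2]
   vanishes below a band and its column [j] is [O(q ^ l_j)].  Polynomial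
   weights are dominated by this geometric decay, which is rapid decay.  Writing
   [T = sum_j (T e_j) e_j^*] over the basis gives a nuclear decomposition with
   [||T e_j|| = O(l_j q ^ l_j)] and [O(l)] basis vectors at level [l], hence
   [T] is trace class.  Finally [F] commutes with [id] and anticommutes with
   [gamma], so [[F, pi(x)] = 2 rho_-(x) (x) F gamma] is trace class too, which
   is finite summability with [k = 0]. *)

From Stdlib Require Import Reals List ZArith Lia Lra.
From Coquelicot Require Import Coquelicot.
Import ListNotations.
Open Scope R_scope.

Section Coordinates.
Context {I : Type} (eqd : forall x y : I, {x = y} + {x <> y}).

Definition coord (v : list (I * C)) (i : I) : C :=
  fold_right Cplus (RtoC 0) (map (fun p => if eqd (fst p) i then snd p else RtoC 0) v).

Definition csum (l : list C) : C := fold_right Cplus (RtoC 0) l.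

Lemma entry_coord T i j : entry eqd T i j = coord (T j) i.
Proof. reflexivity. Qed.

Lemma coord_cons p v i :
  coord (p :: v) i = Cplus (if eqd (fst p) i then snd p else RtoC 0) (coord v i).
Proof. reflexivity. Qed.

Lemma coord_app v w i : coord (v ++ w) i = Cplus (coord v i) (coord w i).
Proof.
  induction v as [|p v IH]; simpl.
  - unfold coord; simpl; ring.
  - rewrite !coord_cons, IH; ring.
Qed.

Lemma coord_scal c v i :
  coord (map (fun p => (fst p, Cmult c (snd p))) v) i = Cmult c (coord v i).
Proof.
  induction v as [|p v IH]; simpl.
  - unfold coord; simpl; ring.
  - rewrite !coord_cons, IH; simpl. destruct (eqd (fst p) i); ring.
Qed.

Lemma coord_notin v i : List.Forall (fun p => fst p <> i) v -> coord v i = RtoC 0.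
Proof.
  induction 1 as [|p v Hp _ IH]; [reflexivity|].
  rewrite coord_cons, IH. destruct (eqd (fst p) i); [contradiction|ring].
Qed.

Lemma Cmod_coord_le v i K : 0 <= K -> List.Forall (fun p => Cmod (snd p) <= K) v ->
  Cmod (coord v i) <= INR (length v) * K.
Proof.
  intros HK. induction 1 as [|p v Hp _ IH].
  - unfold coord; simpl. rewrite Cmod_0. lra.
  - rewrite coord_cons. eapply Rle_trans; [apply Cmod_triangle|].
    cbn [length]. rewrite S_INR.
    assert (Cmod (if eqd (fst p) i then snd p else RtoC 0) <= K)
      by (destruct (eqd (fst p) i); [|rewrite Cmod_0]; auto).
    lra.
Qed.

Lemma Cmod_coord_sub_le v v' i B : 0 <= B ->
  Forall2 (fun p p' => fst p = fst p' /\ Cmod (Cminus (snd p) (snd p')) <= B) v v' ->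
  Cmod (Cminus (coord v i) (coord v' i)) <= INR (length v) * B.
Proof.
  intros HB. induction 1 as [|p p' v v' [Hf Hp] _ IH].
  - unfold coord; simpl. unfold Cminus. rewrite Cplus_opp_r, Cmod_0. lra.
  - rewrite !coord_cons, <- Hf.
    replace (Cminus (Cplus (if eqd (fst p) i then snd p else RtoC 0) (coord v i))
                    (Cplus (if eqd (fst p) i then snd p' else RtoC 0) (coord v' i)))
      with (Cplus (if eqd (fst p) i then Cminus (snd p) (snd p') else RtoC 0)
                  (Cminus (coord v i) (coord v' i)))
      by (destruct (eqd (fst p) i); unfold Cminus; ring).
    eapply Rle_trans; [apply Cmod_triangle|]. cbn [length]. rewrite S_INR.
    assert (Cmod (if eqd (fst p) i then Cminus (snd p) (snd p') else RtoC 0) <= B)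
      by (destruct (eqd (fst p) i); [|rewrite Cmod_0]; auto).
    lra.
Qed.

Lemma entry_add S T i j :
  entry eqd (op_add S T) i j = Cplus (entry eqd S i j) (entry eqd T i j).
Proof. apply coord_app. Qed.

Lemma entry_scal c T i j : entry eqd (op_scal c T) i j = Cmult c (entry eqd T i j).
Proof. apply coord_scal. Qed.

Lemma entry_comp S T i j : entry eqd (op_comp S T) i j =
  csum (map (fun p => Cmult (snd p) (entry eqd S i (fst p))) (T j)).
Proof.
  rewrite entry_coord. unfold op_comp.
  induction (T j) as [|p v IH]; simpl; [reflexivity|].
  rewrite coord_app, IH, coord_scal. reflexivity.
Qed.

Lemma entry_id i j : entry eqd op_id i j = if eqd j i then RtoC 1 else RtoC 0.
Proof. unfold entry, op_id; simpl. destruct (eqd j i); ring. Qed.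

Lemma entry_comp_id T i j : entry eqd (op_comp T op_id) i j = entry eqd T i j.
Proof. rewrite entry_comp. unfold csum, op_id; simpl. ring. Qed.

End Coordinates.

Lemma entry_tensor {I J} (A : op I) (B : op J) d12 d1 d2 (i j : I) (t t' : J) :
  entry d12 (op_tensor A B) (i, t) (j, t') = Cmult (entry d1 A i j) (entry d2 B t t').
Proof.
  rewrite !entry_coord. unfold op_tensor; simpl.
  induction (A j) as [|p v IH]; simpl.
  - unfold coord; simpl; ring.
  - rewrite coord_app, IH, coord_cons, Cmult_plus_distr_r. f_equal. clear IH.
    induction (B t') as [|r w IH]; simpl.
    + unfold coord; simpl. destruct (d1 (fst p) i); ring.
    + rewrite !coord_cons, IH; simpl.
      destruct (d12 (fst p, fst r) (i, t)) as [E|E], (d1 (fst p) i) as [E1|E1],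
        (d2 (fst r) t) as [E2|E2]; try ring;
      first [ injection E; intros; congruence
            | exfalso; apply E; destruct p, r; simpl in *; subst; reflexivity ].
Qed.

Lemma entry_FH i t j t' :
  entry idx2_eq_dec FH (i, t) (j, t') =
  if idx2_eq_dec (j, negb t') (i, t) then RtoC 1 else RtoC 0.
Proof.
  unfold FH. rewrite (entry_tensor _ _ _ idx_eq_dec Bool.bool_dec), entry_id.
  unfold entry, F2; cbn [map fold_right fst snd].
  destruct (idx_eq_dec j i) as [Ej|Ej], (Bool.bool_dec (negb t') t) as [Et|Et],
    (idx2_eq_dec (j, negb t') (i, t)) as [E|E]; subst; try ring; congruence.
Qed.

Lemma entry_FH_comp (P : op idx2) i t j :
  entry idx2_eq_dec (op_comp FH P) (i, t) j = entry idx2_eq_dec P (i, negb t) j.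
Proof.
  rewrite entry_comp, entry_coord. unfold csum.
  induction (P j) as [|[[k t'] c] v IH]; [reflexivity|].
  cbn [map fold_right fst snd]. rewrite coord_cons, <- IH, entry_FH. cbn [fst snd].
  destruct (idx2_eq_dec (k, negb t') (i, t)) as [E|E], (idx2_eq_dec (k, t') (i, negb t)) as [E'|E'];
    try ring; exfalso.
  - injection E; intros; subst. apply E'. rewrite Bool.negb_involutive. reflexivity.
  - injection E'; intros; subst. apply E. rewrite Bool.negb_involutive. reflexivity.
Qed.

Lemma entry_comp_FH (P : op idx2) i j t :
  entry idx2_eq_dec (op_comp P FH) i (j, t) = entry idx2_eq_dec P i (j, negb t).
Proof. rewrite entry_comp. unfold FH, op_tensor, op_id, F2, csum; simpl. ring. Qed.

Lemma entry_gamma2 t t' :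
  entry Bool.bool_dec gamma2 t t' = if Bool.bool_dec t' t then RtoC (if t' then 1 else -1) else RtoC 0.
Proof. unfold entry, gamma2; simpl. destruct (Bool.bool_dec t' t); ring. Qed.

Lemma entry_F2_gamma2 t t' : entry Bool.bool_dec (op_comp F2 gamma2) t t' =
  if Bool.bool_dec (negb t') t then RtoC (if t' then 1 else -1) else RtoC 0.
Proof. unfold entry, op_comp, gamma2, F2; simpl. destruct (Bool.bool_dec (negb t') t); ring. Qed.

(* F commutes with [id2] and anticommutes with [gamma2]. *)
Lemma comm_FH_piH q x (i j : idx2) :
  entry idx2_eq_dec (op_comm FH (piH q x)) i j =
  entry idx2_eq_dec (op_scal (RtoC 2) (op_tensor (rho_minus q x) (op_comp F2 gamma2))) i j.
Proof.
  destruct i as [i t], j as [j t']. unfold op_comm, piH, id2.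
  rewrite entry_add, !entry_scal, entry_FH_comp, entry_comp_FH, !entry_add,
    !(entry_tensor _ _ _ idx_eq_dec Bool.bool_dec), !entry_id, !entry_gamma2, entry_F2_gamma2.
  destruct t, t'; simpl; ring.
Qed.

Section QNumbers.
Variable q : R.
Hypotheses (hq0 : 0 < q) (hq1 : q < 1).

Definition qpow (x : R) : R := Rpower q x.

Lemma qpow_pos x : 0 < qpow x.
Proof. apply exp_pos. Qed.

Lemma qpow_le_qpow x y : x <= y -> qpow y <= qpow x.
Proof.
  intros H. unfold qpow, Rpower.
  assert (ln q < 0) by (rewrite <- ln_1; apply ln_increasing; lra).
  destruct (Req_dec x y) as [->|Hxy]; [lra|].
  left. apply exp_increasing. nra.
Qed.

Lemma qpow_add x y : qpow (x + y) = qpow x * qpow y.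
Proof. apply Rpower_plus. Qed.

Lemma qpow_INR n : qpow (INR n) = q ^ n.
Proof. apply Rpower_pow; lra. Qed.

Lemma qpow_le_pow n x : INR n <= x -> qpow x <= q ^ n.
Proof. intros. rewrite <- qpow_INR. apply qpow_le_qpow; lra. Qed.

Lemma qpow_le_1 x : 0 <= x -> qpow x <= 1.
Proof. intros. apply (qpow_le_pow 0); simpl; lra. Qed.

Lemma qgap_pos : 0 < / q - q.
Proof. assert (1 < / q) by (rewrite <- Rinv_1; apply Rinv_lt_contravar; lra). lra. Qed.

Lemma qn_eq x : qn q x = (qpow (- x) - qpow x) / (/ q - q).
Proof.
  pose proof qgap_pos. unfold qn, qpow.
  replace (q - / q) with (- (/ q - q)) by ring. field. nra.
Qed.

Definition qn_const : R := (1 + / (q * q)) / (/ q - q).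

Lemma qn_const_pos : 0 < qn_const.
Proof.
  pose proof qgap_pos. assert (0 < / (q * q)) by (apply Rinv_0_lt_compat; nra).
  apply Rdiv_lt_0_compat; lra.
Qed.

Lemma Rabs_qn_le x : -1 <= x -> Rabs (qn q x) <= qn_const * qpow (- x).
Proof.
  intros Hx. rewrite qn_eq. pose proof qgap_pos. pose proof (qpow_pos x).
  assert (Hq1 : qpow 1 = q) by (apply Rpower_1; lra).
  assert (Hqm1 : qpow (- (1)) = / q) by (unfold qpow; rewrite Rpower_Ropp, Rpower_1; lra).
  assert (Hup : qpow x <= / q) by (rewrite <- Hqm1; apply qpow_le_qpow; lra).
  assert (Hlow : q <= qpow (- x)) by (rewrite <- Hq1; apply qpow_le_qpow; lra).
  assert (Hinv : / q <= / (q * q) * qpow (- x)).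
  { replace (/ q) with (/ (q * q) * q) by (field; nra).
    apply Rmult_le_compat_l; [left; apply Rinv_0_lt_compat; nra | lra]. }
  unfold qn_const, Rdiv. rewrite Rabs_mult, (Rabs_right (/ (/ q - q)))
    by (left; apply Rinv_0_lt_compat; lra).
  rewrite Rmult_comm, (Rmult_comm _ (/ (/ q - q))), Rmult_assoc.
  apply Rmult_le_compat_l; [left; apply Rinv_0_lt_compat; lra|].
  apply Rabs_le. nra.
Qed.

(* Since [q * (/ q - q) = 1 - q ^ 2], this amounts to [q ^ (2 x) <= q ^ 2]. *)
Lemma qn_ge x : 1 <= x -> q * qpow (- x) <= qn q x.
Proof.
  intros Hx. rewrite qn_eq. pose proof qgap_pos. pose proof (qpow_pos (- x)).
  assert (Hq2 : qpow 2 = q * q) by (replace 2 with (INR 2) by (simpl; ring); rewrite qpow_INR; simpl; ring).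
  assert (H2x : qpow x <= q * q * qpow (- x)).
  { replace x with (2 * x + - x) at 1 by ring. rewrite qpow_add, <- Hq2.
    apply Rmult_le_compat_r; [lra|]. apply qpow_le_qpow. lra. }
  apply (Rmult_le_reg_r (/ q - q)); [lra|].
  replace (q * qpow (- x) * (/ q - q)) with (qpow (- x) - q * q * qpow (- x)) by (field; nra).
  replace ((qpow (- x) - qpow x) / (/ q - q) * (/ q - q)) with (qpow (- x) - qpow x)
    by (field; nra).
  lra.
Qed.

Lemma sqrt_qn_le a b : -1 <= a -> -1 <= b ->
  sqrt (qn q a * qn q b) <= qn_const * qpow (- ((a + b) / 2)).
Proof.
  intros Ha Hb. pose proof qn_const_pos. pose proof (qpow_pos (- ((a + b) / 2))).
  assert (Hsq : qpow (- a) * qpow (- b) = qpow (- ((a + b) / 2)) * qpow (- ((a + b) / 2)))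
    by (rewrite <- !qpow_add; f_equal; field).
  apply Rle_trans with (sqrt (Rabs (qn q a * qn q b))).
  { apply sqrt_le_1_alt, Rle_abs. }
  rewrite <- (sqrt_square (qn_const * qpow (- ((a + b) / 2)))) by nra.
  apply sqrt_le_1_alt. rewrite Rabs_mult.
  apply Rle_trans with ((qn_const * qpow (- a)) * (qn_const * qpow (- b))).
  - apply Rmult_le_compat; try apply Rabs_pos; apply Rabs_qn_le; assumption.
  - right. transitivity (qn_const * qn_const * (qpow (- a) * qpow (- b))); [ring|].
    rewrite Hsq. ring.
Qed.

Lemma Rabs_qpow_mul_div_le al S D s be d ga :
  Rabs S <= s * qpow be -> 0 < d -> d * qpow ga <= D ->
  Rabs (qpow al * S / D) <= s / d * qpow (al + be - ga).
Proof.
  intros HS Hd HD. pose proof (qpow_pos ga). pose proof (qpow_pos al).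
  pose proof (qpow_pos be). pose proof (Rabs_pos S).
  assert (0 < D) by nra.
  replace (qpow (al + be - ga)) with (qpow al * qpow be / qpow ga).
  2:{ unfold Rminus. rewrite !qpow_add. unfold qpow. rewrite (Rpower_Ropp q ga). reflexivity. }
  unfold Rdiv. rewrite !Rabs_mult, (Rabs_right (qpow al)), (Rabs_right (/ D))
    by (left; try apply Rinv_0_lt_compat; lra).
  apply Rle_trans with (qpow al * (s * qpow be) * / (d * qpow ga)).
  - apply Rmult_le_compat; [nra | left; apply Rinv_0_lt_compat; lra | nra |].
    apply Rinv_le_contravar; nra.
  - right. rewrite Rinv_mult. field. split; lra.
Qed.

End QNumbers.

Section Coefficients.
Variable q : R.
Hypotheses (hq0 : 0 < q) (hq1 : q < 1).

Definition coef_const : R :=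
  qn_const q / q + (1 + q ^ 2) * qn_const q / (q * q) * (1 + qn_const q).

Lemma coef_const_ge :
  qn_const q / q <= coef_const /\
  (1 + q ^ 2) * qn_const q / (q * q) <= coef_const /\
  (1 + q ^ 2) * (qn_const q * qn_const q) / (q * q) <= coef_const.
Proof.
  pose proof (qn_const_pos q hq0 hq1) as Hc.
  assert (H1 : 0 <= qn_const q / q) by (apply Rdiv_le_0_compat; lra).
  assert (Hw : 0 <= (1 + q ^ 2) * qn_const q / (q * q)) by (apply Rdiv_le_0_compat; nra).
  unfold coef_const. repeat split; nra.
Qed.

Lemma coef_const_nonneg : 0 <= coef_const.
Proof.
  pose proof coef_const_ge. pose proof (qn_const_pos q hq0 hq1).
  assert (0 <= qn_const q / q) by (apply Rdiv_le_0_compat; lra). lra.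
Qed.

Lemma offdiag_coef_le al a b c :
  -1 <= a -> -1 <= b -> 1 <= c -> 0 <= al - (a + b) / 2 + c ->
  Rabs (qpow q al * sqrt (qn q a * qn q b) / qn q c) <= coef_const.
Proof.
  intros Ha Hb Hc Hal. pose proof coef_const_ge as [HK _].
  assert (0 <= qn_const q / q) by (pose proof (qn_const_pos q hq0 hq1); apply Rdiv_le_0_compat; lra).
  eapply Rle_trans.
  - apply (Rabs_qpow_mul_div_le q _ _ _ (qn_const q) (- ((a + b) / 2)) q (- c)).
    + rewrite Rabs_right by apply Rle_ge, sqrt_pos. apply sqrt_qn_le; assumption.
    + exact hq0.
    + apply qn_ge; assumption.
  - pose proof (qpow_le_1 q hq0 hq1 (al + - ((a + b) / 2) - - c) ltac:(lra)). nra.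
Qed.

Section Diagonal.
Variables (n : nat) (l : R).
Hypothesis Hl : l = INR n + / 2.

Lemma diag_den_ge : q * q * qpow q (- (2 * l) + - (2 * l + 2)) <= qn q (2 * l) * qn q (2 * l + 2).
Proof.
  pose proof (pos_INR n). rewrite qpow_add.
  pose proof (qn_ge q hq0 hq1 (2 * l) ltac:(lra)). pose proof (qn_ge q hq0 hq1 (2 * l + 2) ltac:(lra)).
  pose proof (qpow_pos q (- (2 * l))). pose proof (qpow_pos q (- (2 * l + 2))).
  replace (q * q * (qpow q (- (2 * l)) * qpow q (- (2 * l + 2))))
    with ((q * qpow q (- (2 * l))) * (q * qpow q (- (2 * l + 2)))) by ring.
  apply Rmult_le_compat; nra.
Qed.

Lemma diag_coef_le al S s be :
  Rabs S <= s * qpow q be -> INR n <= al + be + 4 * l + 2 ->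
  Rabs (qpow q al * S / (qn q (2 * l) * qn q (2 * l + 2))) <= s / (q * q) * q ^ n.
Proof.
  intros HS Hn.
  assert (0 <= s) by (pose proof (Rabs_pos S); pose proof (qpow_pos q be); nra).
  assert (0 <= s / (q * q)) by (apply Rdiv_le_0_compat; nra).
  eapply Rle_trans.
  - apply (Rabs_qpow_mul_div_le q _ _ _ s be (q * q) (- (2 * l) + - (2 * l + 2))); auto.
    + nra.
    + apply diag_den_ge.
  - apply Rmult_le_compat_l; [assumption|]. apply qpow_le_pow; lra.
Qed.

Variable m : R.
Hypotheses (Hlm : 0 <= l + m) (Hlm' : 0 <= l - m).

Lemma coef_a_diag_le :
  Rabs ((1 + q ^ 2) * Rpower q (m - / 2) / (qn q (2 * l) * qn q (2 * l + 2))
        * sqrt (qn q (l + m + 1) * qn q (l - m))) <= coef_const * q ^ n.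
Proof.
  pose proof coef_const_ge as [_ [HK _]]. pose proof (pos_INR n). pose proof (pow_le q n ltac:(lra)).
  pose proof (qn_ge q hq0 hq1 (2 * l) ltac:(lra)). pose proof (qn_ge q hq0 hq1 (2 * l + 2) ltac:(lra)).
  pose proof (qpow_pos q (- (2 * l))). pose proof (qpow_pos q (- (2 * l + 2))).
  replace ((1 + q ^ 2) * Rpower q (m - / 2) / (qn q (2 * l) * qn q (2 * l + 2))
           * sqrt (qn q (l + m + 1) * qn q (l - m)))
    with (qpow q (m - / 2) * ((1 + q ^ 2) * sqrt (qn q (l + m + 1) * qn q (l - m)))
          / (qn q (2 * l) * qn q (2 * l + 2)))
    by (unfold qpow; field; split; nra).
  eapply Rle_trans.
  - apply (diag_coef_le _ _ ((1 + q ^ 2) * qn_const q) (- ((l + m + 1 + (l - m)) / 2))).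
    + rewrite Rabs_mult, Rabs_right, (Rabs_right (sqrt _)) by (apply Rle_ge; try apply sqrt_pos; nra).
      rewrite Rmult_assoc. apply Rmult_le_compat_l; [nra|]. apply sqrt_qn_le; lra.
    + lra.
  - apply Rmult_le_compat_r; lra.
Qed.

Lemma coef_b_diag_le :
  Rabs ((qn q (l - m + 1) * qn q (l + m) - q ^ 2 * qn q (l - m) * qn q (l + m + 1))
        / (qn q (2 * l) * qn q (2 * l + 2))) <= coef_const * q ^ n.
Proof.
  pose proof coef_const_ge as [_ [_ HK]]. pose proof (pos_INR n). pose proof (pow_le q n ltac:(lra)).
  pose proof (qn_const_pos q hq0 hq1).
  set (N := qn q (l - m + 1) * qn q (l + m) - q ^ 2 * qn q (l - m) * qn q (l + m + 1)).
  replace (N / (qn q (2 * l) * qn q (2 * l + 2)))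
    with (qpow q 0 * N / (qn q (2 * l) * qn q (2 * l + 2)))
    by (unfold qpow; rewrite Rpower_O by lra; unfold Rdiv; ring).
  eapply Rle_trans.
  - apply (diag_coef_le _ _ ((1 + q ^ 2) * (qn_const q * qn_const q)) (- (2 * l + 1))).
    + assert (Hprod : forall a b, -1 <= a -> -1 <= b -> a + b = 2 * l + 1 ->
                Rabs (qn q a * qn q b) <= qn_const q * qn_const q * qpow q (- (2 * l + 1))).
      { intros a b Ha Hb Hab.
        replace (- (2 * l + 1)) with (- a + - b) by lra. rewrite qpow_add, Rabs_mult.
        pose proof (Rabs_qn_le q hq0 hq1 a Ha). pose proof (Rabs_qn_le q hq0 hq1 b Hb).
        replace (qn_const q * qn_const q * (qpow q (- a) * qpow q (- b)))
          with ((qn_const q * qpow q (- a)) * (qn_const q * qpow q (- b))) by ring.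
        apply Rmult_le_compat; auto; apply Rabs_pos. }
      pose proof (Hprod (l - m + 1) (l + m) ltac:(lra) ltac:(lra) ltac:(lra)).
      pose proof (Hprod (l - m) (l + m + 1) ltac:(lra) ltac:(lra) ltac:(lra)).
      unfold N. eapply Rle_trans; [apply Rabs_triang|].
      rewrite Rabs_Ropp, (Rmult_assoc (q ^ 2)), (Rabs_mult (q ^ 2)), (Rabs_right (q ^ 2))
        by (apply Rle_ge, pow_le; lra).
      pose proof (pow_le q 2 ltac:(lra)). nra.
    + lra.
  - apply Rmult_le_compat_r; lra.
Qed.

End Diagonal.
End Coefficients.

Lemma Forall2_Forall_l {A B} (R : A -> B -> Prop) (P : A -> Prop) l l' :
  (forall a b, R a b -> P a) -> Forall2 R l l' -> List.Forall P l.
Proof. intros H. induction 1; constructor; eauto. Qed.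

Lemma Forall2_Forall_r {A B} (R : A -> B -> Prop) (P : B -> Prop) l l' :
  (forall a b, R a b -> P b) -> Forall2 R l l' -> List.Forall P l'.
Proof. intros H. induction 1; constructor; eauto. Qed.

Lemma Forall2_map {A B A' B'} (R : A -> B -> Prop) (R' : A' -> B' -> Prop) f g l l' :
  (forall a b, R a b -> R' (f a) (g b)) -> Forall2 R l l' -> Forall2 R' (map f l) (map g l').
Proof. intros H. induction 1; simpl; constructor; auto. Qed.

Lemma Forall2_map_same {A A' B'} (R : A' -> B' -> Prop) (f : A -> A') g l :
  (forall a, In a l -> R (f a) (g a)) -> Forall2 R (map f l) (map g l).
Proof. induction l; simpl; intros; constructor; auto. Qed.

Lemma Forall2_flat_map {A B A' B'} (R : A -> B -> Prop) (R' : A' -> B' -> Prop) f g l l' :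
  (forall a b, R a b -> Forall2 R' (f a) (g b)) -> Forall2 R l l' ->
  Forall2 R' (flat_map f l) (flat_map g l').
Proof. intros H. induction 1; simpl; [constructor|]. apply Forall2_app; auto. Qed.

Lemma length_flat_map_le {A B} (f : A -> list B) l M :
  (forall a, In a l -> (length (f a) <= M)%nat) -> (length (flat_map f l) <= length l * M)%nat.
Proof.
  induction l as [|a l IH]; simpl; intros H; [lia|].
  rewrite length_app. specialize (IH (fun b Hb => H b (or_intror Hb))).
  specialize (H a (or_introl eq_refl)). lia.
Qed.

Lemma pow_le_pow_of_le q a b : 0 < q -> q <= 1 -> (b <= a)%nat -> q ^ a <= q ^ b.
Proof.
  intros. replace a with (b + (a - b))%nat by lia. rewrite pow_add.
  assert (q ^ (a - b) <= 1) by (rewrite <- (pow1 (a - b)); apply pow_incr; lra).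
  pose proof (pow_le q b ltac:(lra)). nra.
Qed.

(* The invariant satisfied by the pairs [(pi_s q true x, pi_s q false x)]: the
   band condition and the uniform bounds are what let the [q ^ l] decay of the
   difference survive products. *)
Record qclose_coef (q : R) (d : nat) (K : R) (j : idx) (p p' : idx * C) : Prop := {
  qclose_index : fst p = fst p';
  qclose_valid : validb (fst p) = true;
  qclose_band_le : (fst (fst p) <= fst j + d)%nat;
  qclose_band_ge : (fst j <= fst (fst p) + d)%nat;
  qclose_bound_l : Cmod (snd p) <= K;
  qclose_bound_r : Cmod (snd p') <= K;
  qclose_diff : Cmod (Cminus (snd p) (snd p')) <= K * q ^ fst j }.

Definition qclose (q : R) (T T' : op idx) : Prop :=
  exists (d L : nat) (K : R), 0 <= K /\ forall j, validb j = true ->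
    (length (T j) <= L)%nat /\ Forall2 (qclose_coef q d K j) (T j) (T' j).

Lemma qclose_coef_mono q d d' K K' j p p' :
  0 < q -> (d <= d')%nat -> K <= K' -> qclose_coef q d K j p p' -> qclose_coef q d' K' j p p'.
Proof.
  intros Hq Hd HK [H1 H2 H3 H4 H5 H6 H7]. pose proof (pow_le q (fst j) ltac:(lra)).
  split; auto; try lia; try lra. nra.
Qed.

Section QcloseColumns.
Variables (q : R) (d : nat) (K : R) (j : idx) (v v' : list (idx * C)).
Hypotheses (hq : 0 < q) (HK : 0 <= K) (Hvv : Forall2 (qclose_coef q d K j) v v').

Lemma qclose_coord_le i :
  Cmod (coord idx_eq_dec v i) <= INR (length v) * K /\
  Cmod (coord idx_eq_dec v' i) <= INR (length v) * K /\
  Cmod (Cminus (coord idx_eq_dec v i) (coord idx_eq_dec v' i)) <= INR (length v) * (K * q ^ fst j).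
Proof.
  pose proof (pow_le q (fst j) ltac:(lra)). split; [|split].
  - apply Cmod_coord_le; auto. eapply Forall2_Forall_l; [|exact Hvv]. apply qclose_bound_l.
  - rewrite (Forall2_length Hvv). apply Cmod_coord_le; auto.
    eapply Forall2_Forall_r; [|exact Hvv]. apply qclose_bound_r.
  - apply Cmod_coord_sub_le; [nra|]. eapply Forall2_impl; [|exact Hvv].
    intros p p' Hp. split; [apply Hp | apply Hp].
Qed.

Lemma qclose_coord_out i : (fst j + d < fst i)%nat ->
  coord idx_eq_dec v i = RtoC 0 /\ coord idx_eq_dec v' i = RtoC 0.
Proof.
  intros Hi. split; apply coord_notin.
  - eapply Forall2_Forall_l; [|exact Hvv].
    intros p p' Hp E. pose proof (qclose_band_le _ _ _ _ _ _ Hp). subst. lia.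
  - eapply Forall2_Forall_r; [|exact Hvv].
    intros p p' Hp E. pose proof (qclose_band_le _ _ _ _ _ _ Hp).
    rewrite (qclose_index _ _ _ _ _ _ Hp) in *. subst. lia.
Qed.

End QcloseColumns.

Lemma qclose_id q : 0 < q -> qclose q op_id op_id.
Proof.
  intros hq. exists 0%nat, 1%nat, 1. split; [lra|]. intros j Hv. split; [simpl; lia|].
  constructor; [|constructor]. pose proof (pow_le q (fst j) ltac:(lra)).
  split; cbn [fst snd]; auto; try lia; rewrite ?Cmod_1; try lra.
  unfold Cminus. rewrite Cplus_opp_r, Cmod_0. lra.
Qed.

Lemma qclose_scal q c T T' : 0 < q -> qclose q T T' -> qclose q (op_scal c T) (op_scal c T').
Proof.
  intros hq [d [L [K [HK H]]]]. pose proof (Cmod_ge_0 c).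
  exists d, L, (Cmod c * K). split; [nra|]. intros j Hv. destruct (H j Hv) as [Hl HF].
  unfold op_scal. split; [rewrite length_map; auto|].
  eapply Forall2_map; [|exact HF]. intros p p' [H1 H2 H3 H4 H5 H6 H7].
  split; cbn [fst snd]; auto; rewrite ?Cmod_mult.
  - apply Rmult_le_compat_l; auto.
  - apply Rmult_le_compat_l; auto.
  - replace (Cminus (Cmult c (snd p)) (Cmult c (snd p'))) with (Cmult c (Cminus (snd p) (snd p')))
      by (unfold Cminus; ring).
    rewrite Cmod_mult, Rmult_assoc. apply Rmult_le_compat_l; auto.
Qed.

Lemma qclose_add q S S' T T' : 0 < q -> qclose q S S' -> qclose q T T' ->
  qclose q (op_add S T) (op_add S' T').
Proof.
  intros hq [d1 [L1 [K1 [HK1 H1]]]] [d2 [L2 [K2 [HK2 H2]]]].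
  exists (Nat.max d1 d2), (L1 + L2)%nat, (Rmax K1 K2).
  split; [eapply Rle_trans; [exact HK1 | apply Rmax_l]|].
  intros j Hv. destruct (H1 j Hv) as [Hl1 HF1], (H2 j Hv) as [Hl2 HF2].
  unfold op_add. split; [rewrite length_app; lia|]. apply Forall2_app.
  - eapply Forall2_impl; [|exact HF1]. intros p p'.
    apply qclose_coef_mono; [auto | lia | apply Rmax_l].
  - eapply Forall2_impl; [|exact HF2]. intros p p'.
    apply qclose_coef_mono; [auto | lia | apply Rmax_r].
Qed.

(* Writing [s r - s' r' = s (r - r') + (s - s') r'], the first term decays like
   [q ^ l] of the intermediate index, which is within [dT] of the column index. *)
Lemma qclose_coef_mul q dS dT KS KT j p p' r r' :
  0 < q -> q < 1 -> 0 <= KS -> 0 <= KT ->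
  qclose_coef q dT KT j p p' -> qclose_coef q dS KS (fst p) r r' ->
  qclose_coef q (dS + dT) (KS * KT * (1 + / q ^ dT)) j
    (fst r, Cmult (snd p) (snd r)) (fst r', Cmult (snd p') (snd r')).
Proof.
  intros hq hq1 HKS HKT [Hf Hvp B1 B2 Hp Hp' Hd] [Gf Gv C1 C2 Hr Hr' Gd].
  assert (Hqd : 0 < q ^ dT) by (apply pow_lt; lra).
  assert (Hinv : 0 < / q ^ dT) by (apply Rinv_0_lt_compat; lra).
  assert (HKK : KS * KT <= KS * KT * (1 + / q ^ dT)) by (pose proof (Rmult_le_pos _ _ HKS HKT); nra).
  pose proof (Cmod_ge_0 (snd p)). pose proof (Cmod_ge_0 (snd p')).
  pose proof (Cmod_ge_0 (snd r)). pose proof (Cmod_ge_0 (snd r')).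
  pose proof (pow_le q (fst j) ltac:(lra)).
  assert (Hqp : q ^ fst (fst p) <= q ^ fst j * / q ^ dT).
  { apply (Rmult_le_reg_r (q ^ dT)); auto.
    rewrite Rmult_assoc, Rinv_l, Rmult_1_r, <- pow_add by lra.
    apply pow_le_pow_of_le; lia || lra. }
  split; cbn [fst snd]; auto; try lia.
  - rewrite Cmod_mult. eapply Rle_trans; [|exact HKK].
    rewrite (Rmult_comm KS). apply Rmult_le_compat; auto.
  - rewrite Cmod_mult. eapply Rle_trans; [|exact HKK].
    rewrite (Rmult_comm KS). apply Rmult_le_compat; auto.
  - replace (Cminus (Cmult (snd p) (snd r)) (Cmult (snd p') (snd r')))
      with (Cplus (Cmult (snd p) (Cminus (snd r) (snd r'))) (Cmult (Cminus (snd p) (snd p')) (snd r')))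
      by (unfold Cminus; ring).
    eapply Rle_trans; [apply Cmod_triangle|]. rewrite !Cmod_mult.
    assert (X1 : Cmod (snd p) * Cmod (Cminus (snd r) (snd r')) <= KT * (KS * (q ^ fst j * / q ^ dT))).
    { apply Rmult_le_compat; auto; [apply Cmod_ge_0|].
      eapply Rle_trans; [exact Gd|]. apply Rmult_le_compat_l; auto. }
    assert (X2 : Cmod (Cminus (snd p) (snd p')) * Cmod (snd r') <= KT * q ^ fst j * KS)
      by (apply Rmult_le_compat; auto; apply Cmod_ge_0).
    lra.
Qed.

Lemma qclose_comp q S S' T T' : 0 < q -> q < 1 -> qclose q S S' -> qclose q T T' ->
  qclose q (op_comp S T) (op_comp S' T').
Proof.
  intros hq hq1 [dS [LS [KS [HKS HS]]]] [dT [LT [KT [HKT HT]]]].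
  exists (dS + dT)%nat, (LT * LS)%nat, (KS * KT * (1 + / q ^ dT)). split.
  { assert (0 < / q ^ dT) by (apply Rinv_0_lt_compat, pow_lt; lra).
    pose proof (Rmult_le_pos _ _ HKS HKT). nra. }
  intros j Hv. destruct (HT j Hv) as [HlT HFT]. unfold op_comp. split.
  - eapply Nat.le_trans; [apply length_flat_map_le with (M := LS)|].
    + intros p Hp. rewrite length_map.
      assert (Hvalid : List.Forall (fun p => validb (fst p) = true) (T j))
        by (eapply Forall2_Forall_l; [apply qclose_valid | exact HFT]).
      apply (HS (fst p)). rewrite List.Forall_forall in Hvalid. auto.
    + apply Nat.mul_le_mono_r; auto.
  - eapply Forall2_flat_map; [|exact HFT]. intros p p' Hpp.
    destruct (HS (fst p) (qclose_valid _ _ _ _ _ _ Hpp)) as [_ HFS].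
    rewrite <- (qclose_index _ _ _ _ _ _ Hpp).
    eapply Forall2_map; [|exact HFS]. intros r r'.
    apply qclose_coef_mul; auto.
Qed.

Record qclose_raw (q K : R) (j : idx) (p p' : idx * R) : Prop := {
  raw_index : fst p = fst p';
  raw_band_le : (fst (fst p) <= fst j + 1)%nat;
  raw_band_ge : (fst j <= fst (fst p) + 1)%nat;
  raw_bound_l : Rabs (snd p) <= K;
  raw_bound_r : Rabs (snd p') <= K;
  raw_diff : Rabs (snd p - snd p') <= K * q ^ fst j }.

Lemma keep_valid_length v : (length (keep_valid v) <= length v)%nat.
Proof. unfold keep_valid. rewrite length_map. apply filter_length_le. Qed.

Lemma keep_valid_qclose q K j v v' : Forall2 (qclose_raw q K j) v v' ->
  Forall2 (qclose_coef q 1 K j) (keep_valid v) (keep_valid v').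
Proof.
  induction 1 as [|p p' v v' [Hf H1 H2 H3 H4 H5] _ IH]; [constructor|].
  unfold keep_valid in *; simpl. rewrite <- Hf.
  destruct (validb (fst p)) eqn:Ev; simpl; auto.
  constructor; auto. split; simpl; auto; rewrite ?Cmod_R; auto.
  replace (Cminus (RtoC (snd p)) (RtoC (snd p'))) with (RtoC (snd p - snd p'))
    by (unfold Cminus; apply injective_projections; simpl; ring).
  rewrite Cmod_R. auto.
Qed.

Section Generators.
Variable q : R.
Hypotheses (hq0 : 0 < q) (hq1 : q < 1).

Lemma qclose_raw_same K (j i : idx) c :
  (fst i <= fst j + 1)%nat -> (fst j <= fst i + 1)%nat -> Rabs c <= K ->
  qclose_raw q K j (i, c) (i, c).
Proof.
  intros. pose proof (pow_le q (fst j) ltac:(lra)). pose proof (Rabs_pos c).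
  split; simpl; auto. unfold Rminus. rewrite Rplus_opp_r, Rabs_R0. nra.
Qed.

Lemma qclose_raw_sgn K (j i : idx) X :
  (fst i <= fst j + 1)%nat -> (fst j <= fst i + 1)%nat -> Rabs X <= K * q ^ fst j ->
  qclose_raw q (2 * K) j (i, sgn true * X) (i, sgn false * X).
Proof.
  intros. unfold sgn. pose proof (pow_lt q (fst j) hq0).
  assert (q ^ fst j <= 1) by (rewrite <- (pow1 (fst j)); apply pow_incr; lra).
  pose proof (Rabs_pos X). assert (0 <= K) by nra.
  split; simpl; auto; rewrite ?Rmult_1_l.
  - nra.
  - replace (-1 * X) with (- X) by ring. rewrite Rabs_Ropp. nra.
  - replace (X - -1 * X) with (2 * X) by ring. rewrite Rabs_mult, Rabs_right by lra. nra.
Qed.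

Lemma valid_lm j : validb j = true -> 0 <= lval j + mval j /\ 0 <= lval j - mval j.
Proof.
  destruct j as [n k]; unfold validb, lval, mval; simpl. intros H.
  apply andb_prop in H as [H1 H2]. apply Z.leb_le, IZR_le in H1, H2.
  rewrite <- INR_IZR_INZ in H2. rewrite minus_IZR, opp_IZR, <- INR_IZR_INZ in H1.
  split; lra.
Qed.

Lemma col_a_raw_qclose j : validb j = true ->
  Forall2 (qclose_raw q (2 * coef_const q) j) (col_a_raw q true j) (col_a_raw q false j).
Proof.
  intros Hv. destruct (valid_lm j Hv) as [Hp Hm]. pose proof (coef_const_nonneg q hq0 hq1).
  pose proof (coef_a_diag_le q hq0 hq1 (fst j) (lval j) eq_refl (mval j) Hp Hm).
  destruct j as [n k]. unfold col_a_raw, lval, mval in *. cbn [fst snd] in *.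
  pose proof (pos_INR n).
  assert (forall al a b c, -1 <= a -> -1 <= b -> 1 <= c -> 0 <= al - (a + b) / 2 + c ->
            Rabs (Rpower q al * sqrt (qn q a * qn q b) / qn q c) <= 2 * coef_const q)
    by (intros; pose proof (offdiag_coef_le q hq0 hq1 al a b c); unfold qpow in *; lra).
  repeat apply Forall2_app; [| destruct n as [|n'] |];
    repeat (apply Forall2_cons || apply Forall2_nil).
  - apply qclose_raw_same; cbn [fst]; try lia. apply H2; lra.
  - apply qclose_raw_same; cbn [fst]; try lia. rewrite Rabs_Ropp, S_INR in *. apply H2; lra.
  - apply qclose_raw_sgn; cbn [fst]; try lia. assumption.
Qed.

Lemma col_b_raw_qclose j : validb j = true ->
  Forall2 (qclose_raw q (2 * coef_const q) j) (col_b_raw q true j) (col_b_raw q false j).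
Proof.
  intros Hv. destruct (valid_lm j Hv) as [Hp Hm]. pose proof (coef_const_nonneg q hq0 hq1).
  pose proof (coef_b_diag_le q hq0 hq1 (fst j) (lval j) eq_refl (mval j) Hp Hm).
  destruct j as [n k]. unfold col_b_raw, lval, mval in *. cbn [fst snd] in *.
  pose proof (pos_INR n).
  assert (forall al a b c, -1 <= a -> -1 <= b -> 1 <= c -> 0 <= al - (a + b) / 2 + c ->
            Rabs (- (Rpower q al * sqrt (qn q a * qn q b) / qn q c)) <= 2 * coef_const q)
    by (intros; rewrite Rabs_Ropp; pose proof (offdiag_coef_le q hq0 hq1 al a b c);
        unfold qpow in *; lra).
  repeat apply Forall2_app; [| destruct n as [|n'] |];
    repeat (apply Forall2_cons || apply Forall2_nil).
  - apply qclose_raw_same; cbn [fst]; try lia. apply H2; lra.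
  - apply qclose_raw_same; cbn [fst]; try lia. rewrite S_INR in *. apply H2; lra.
  - apply qclose_raw_sgn; cbn [fst]; try lia. assumption.
Qed.

Lemma op_a_qclose_col j : validb j = true ->
  (length (op_a q true j) <= 3)%nat /\
  Forall2 (qclose_coef q 1 (2 * coef_const q) j) (op_a q true j) (op_a q false j).
Proof.
  intros Hv. unfold op_a. split.
  - eapply Nat.le_trans; [apply keep_valid_length|]. unfold col_a_raw. destruct (fst j); simpl; lia.
  - apply keep_valid_qclose, col_a_raw_qclose, Hv.
Qed.

Lemma qclose_a : qclose q (op_a q true) (op_a q false).
Proof.
  exists 1%nat, 3%nat, (2 * coef_const q). split; [pose proof (coef_const_nonneg q hq0 hq1); lra|].
  exact op_a_qclose_col.
Qed.

Lemma qclose_b : qclose q (op_b q true) (op_b q false).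
Proof.
  exists 1%nat, 3%nat, (2 * coef_const q). split; [pose proof (coef_const_nonneg q hq0 hq1); lra|].
  intros j Hv. unfold op_b. split.
  - eapply Nat.le_trans; [apply keep_valid_length|]. unfold col_b_raw. destruct (fst j); simpl; lia.
  - apply keep_valid_qclose, col_b_raw_qclose, Hv.
Qed.

Lemma sources_astar_band j i : In i (sources_astar j) ->
  (fst i <= fst j + 1)%nat /\ (fst j <= fst i + 1)%nat.
Proof.
  destruct j as [n k]; unfold sources_astar; simpl.
  destruct n; simpl; intros H; repeat destruct H as [H|H]; subst; simpl; lia || contradiction.
Qed.

(* Column [j] of [pi(a^* )] is read off rows of the columns [i] of [pi(a)], and
   [l_j <= l_i + 1] turns the decay [q ^ l_i] into [q ^ l_j / q]. *)
Lemma qclose_astar : qclose q (op_astar q true) (op_astar q false).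
Proof.
  set (K := 2 * coef_const q).
  assert (HK : 0 <= K) by (unfold K; pose proof (coef_const_nonneg q hq0 hq1); lra).
  exists 1%nat, 3%nat, (3 * K / q). split; [apply Rdiv_le_0_compat; lra|].
  intros j Hv. unfold op_astar. split.
  { rewrite length_map. eapply Nat.le_trans; [apply filter_length_le|].
    destruct j as [n k]; destruct n; simpl; lia. }
  apply Forall2_map_same. intros i Hi. apply filter_In in Hi as [Hi Hvi].
  destruct (sources_astar_band j i Hi) as [B1 B2].
  destruct (op_a_qclose_col i Hvi) as [Hl HF].
  destruct (qclose_coord_le q 1 K i _ _ hq0 HK HF j) as [C1 [C2 C3]].
  rewrite !entry_coord.
  assert (Hlen : INR (length (op_a q true i)) <= 3) by (apply (le_INR _ 3) in Hl; simpl in Hl; lra).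
  assert (Hiq : 1 <= / q) by (rewrite <- Rinv_1; apply Rinv_le_contravar; lra).
  assert (Hqi : q ^ fst i <= q ^ fst j / q).
  { apply (Rmult_le_reg_r q); auto. unfold Rdiv. rewrite Rmult_assoc, Rinv_l, Rmult_1_r by lra.
    replace (q ^ fst i * q) with (q ^ S (fst i)) by (simpl; ring).
    apply pow_le_pow_of_le; lia || lra. }
  pose proof (pow_le q (fst i) ltac:(lra)). pose proof (pos_INR (length (op_a q true i))).
  split; cbn [fst snd]; auto; rewrite ?Cmod_conj; unfold Rdiv in *.
  - nra.
  - nra.
  - rewrite <- Cminus_conj, Cmod_conj. eapply Rle_trans; [exact C3|].
    apply Rle_trans with (3 * (K * (q ^ fst j * / q))); [apply Rmult_le_compat; nra | right; ring].
Qed.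

End Generators.

Lemma qclose_pi q : 0 < q -> q < 1 -> forall x, qclose q (pi_s q true x) (pi_s q false x).
Proof.
  intros hq0 hq1 x. unfold pi_s.
  induction x as [|[]| | |]; simpl.
  - apply qclose_id; auto.
  - apply qclose_a; auto.
  - apply qclose_astar; auto.
  - apply qclose_b; auto.
  - apply qclose_scal; auto.
  - apply qclose_add; auto.
  - apply qclose_comp; auto.
Qed.

Lemma bernoulli_ineq h N : 0 <= h -> 1 + INR N * h <= (1 + h) ^ N.
Proof.
  intros Hh. induction N as [|N IH]; [simpl; lra|].
  rewrite S_INR, <- tech_pow_Rmult. pose proof (pos_INR N). nra.
Qed.

Lemma INR_mul_pow_bounded r : 0 < r -> r < 1 -> exists M, forall N, INR (S N) * r ^ N <= M.
Proof.
  intros H0 H1. set (h := / r - 1).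
  assert (Hh : 0 < h) by (unfold h; assert (1 < / r) by (rewrite <- Rinv_1; apply Rinv_lt_contravar; lra); lra).
  assert (Hih : 0 < / h) by (apply Rinv_0_lt_compat; lra).
  exists (1 + / h). intros N. pose proof (bernoulli_ineq h N ltac:(lra)). pose proof (pos_INR N).
  assert (Hr : r ^ N * (1 + h) ^ N = 1).
  { rewrite <- Rpow_mult_distr. replace (r * (1 + h)) with 1 by (unfold h; field; lra). apply pow1. }
  assert (0 < (1 + h) ^ N) by (apply pow_lt; lra).
  assert (INR N + 1 <= (1 + / h) * (1 + INR N * h)).
  { replace ((1 + / h) * (1 + INR N * h)) with (1 + INR N * h + / h + INR N) by (field; lra). nra. }
  apply (Rmult_le_reg_r ((1 + h) ^ N)); auto.
  rewrite S_INR, Rmult_assoc, Hr. nra.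
Qed.

(* Induction on [p], splitting [r ^ N] as [sqrt r ^ N * sqrt r ^ N]. *)
Lemma INR_pow_mul_pow_bounded p : forall r, 0 < r -> r < 1 ->
  exists M, forall N, INR (S N) ^ p * r ^ N <= M.
Proof.
  induction p as [|p IH]; intros r H0 H1.
  - exists 1. intros N. rewrite pow_O, Rmult_1_l, <- (pow1 N). apply pow_incr. lra.
  - set (s := sqrt r).
    assert (Hs0 : 0 < s) by (apply sqrt_lt_R0; lra).
    assert (Hs1 : s < 1) by (unfold s; rewrite <- sqrt_1; apply sqrt_lt_1_alt; lra).
    destruct (IH s Hs0 Hs1) as [M1 B1], (INR_mul_pow_bounded s Hs0 Hs1) as [M2 B2].
    exists (M1 * M2). intros N.
    assert (Hr : r ^ N = s ^ N * s ^ N)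
      by (rewrite <- Rpow_mult_distr; unfold s; rewrite sqrt_sqrt by lra; reflexivity).
    rewrite Hr, <- tech_pow_Rmult.
    replace (INR (S N) * INR (S N) ^ p * (s ^ N * s ^ N))
      with ((INR (S N) ^ p * s ^ N) * (INR (S N) * s ^ N)) by ring.
    pose proof (pow_lt s N Hs0). pose proof (pos_INR (S N)).
    pose proof (pow_le (INR (S N)) p ltac:(lra)).
    apply Rmult_le_compat; auto; apply Rmult_le_pos; lra.
Qed.

Lemma entry_rho_minus q x i j : entry idx_eq_dec (rho_minus q x) i j =
  Cmult (RtoC (/ 2)) (Cminus (entry idx_eq_dec (pi_s q true x) i j) (entry idx_eq_dec (pi_s q false x) i j)).
Proof.
  unfold rho_minus. rewrite entry_scal, entry_add, entry_scal. unfold Cminus.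
  f_equal. f_equal. apply injective_projections; simpl; ring.
Qed.

Lemma rho_minus_decay q : 0 < q -> q < 1 -> forall x, exists (d : nat) (B : R), 0 <= B /\
  forall i j, validb i = true -> validb j = true ->
  Cmod (entry idx_eq_dec (rho_minus q x) i j) <= B * q ^ fst j /\
  ((fst j + d < fst i)%nat -> entry idx_eq_dec (rho_minus q x) i j = RtoC 0).
Proof.
  intros hq0 hq1 x. destruct (qclose_pi q hq0 hq1 x) as [d [L [K [HK HI]]]].
  pose proof (pos_INR L).
  exists d, (/ 2 * (INR L * K)). split; [apply Rmult_le_pos; nra|].
  intros i j Hvi Hvj. destruct (HI j Hvj) as [Hl HF].
  destruct (qclose_coord_le q d K j _ _ hq0 HK HF i) as [_ [_ Hdiff]].
  rewrite entry_rho_minus, !entry_coord. split.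
  - rewrite Cmod_mult, Cmod_R, Rabs_right by lra.
    pose proof (pow_le q (fst j) ltac:(lra)). apply (le_INR _ L) in Hl.
    assert (INR (length (pi_s q true x j)) * (K * q ^ fst j) <= INR L * (K * q ^ fst j))
      by (apply Rmult_le_compat_r; nra).
    nra.
  - intros Hlt. destruct (qclose_coord_out q d K j _ _ HF i Hlt) as [-> ->].
    apply injective_projections; simpl; ring.
Qed.

Lemma rapid_decay_rho_minus q : 0 < q -> q < 1 -> forall x, rapid_decay (rho_minus q x).
Proof.
  intros hq0 hq1 x p. destruct (rho_minus_decay q hq0 hq1 x) as [d [B [HB Hdec]]].
  destruct (INR_pow_mul_pow_bounded p q hq0 hq1) as [M HM].
  assert (HM0 : 0 <= M).
  { specialize (HM 0%nat). rewrite pow_O, Rmult_1_r in HM.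
    pose proof (pow_le (INR 1) p (pos_INR 1)). lra. }
  pose proof (pos_INR d). assert (Hdp : 0 <= (INR d + 2) ^ p) by (apply pow_le; lra).
  exists (B * (INR d + 2) ^ p * M). intros i j Hvi Hvj.
  destruct (Hdec i j Hvi Hvj) as [Hij Hout]. unfold lval.
  destruct (Nat.lt_ge_cases (fst j + d) (fst i)) as [Hlt|Hge].
  - rewrite (Hout Hlt), Cmod_0, Rmult_0_l. apply Rmult_le_pos; [apply Rmult_le_pos|]; lra.
  - set (w := INR (fst i) + / 2 + (INR (fst j) + / 2) + 1).
    assert (Hw : 0 <= w <= (INR d + 2) * INR (S (fst j))).
    { apply le_INR in Hge. rewrite plus_INR in Hge. unfold w. rewrite S_INR.
      pose proof (pos_INR (fst i)). pose proof (pos_INR (fst j)). nra. }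
    assert (Hwp : w ^ p <= (INR d + 2) ^ p * INR (S (fst j)) ^ p)
      by (rewrite <- Rpow_mult_distr; apply pow_incr; lra).
    pose proof (HM (fst j)). pose proof (Cmod_ge_0 (entry idx_eq_dec (rho_minus q x) i j)).
    pose proof (pow_le w p ltac:(lra)). pose proof (pow_le q (fst j) ltac:(lra)).
    apply Rle_trans with (B * q ^ fst j * ((INR d + 2) ^ p * INR (S (fst j)) ^ p)).
    + apply Rmult_le_compat; auto.
    + replace (B * q ^ fst j * ((INR d + 2) ^ p * INR (S (fst j)) ^ p))
        with (B * (INR d + 2) ^ p * (INR (S (fst j)) ^ p * q ^ fst j)) by ring.
      apply Rmult_le_compat_l; [apply Rmult_le_pos|]; auto.
Qed.

Lemma NoDup_flat_map {A B} (f : A -> list B) l :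
  NoDup l -> (forall x, NoDup (f x)) -> (forall x y z, In z (f x) -> In z (f y) -> x = y) ->
  NoDup (flat_map f l).
Proof.
  induction 1 as [|x l Hx Hl IH]; simpl; intros Hf Hd; [constructor|].
  apply NoDup_app; auto. intros z Hz1 Hz2. apply in_flat_map in Hz2 as [y [Hy Hz]].
  assert (x = y) by (eapply Hd; eauto). subst. contradiction.
Qed.

Lemma In_block n (i : idx) : In i (block n) <-> fst i = n /\ validb i = true.
Proof.
  unfold block, validb. rewrite in_map_iff. split.
  - intros [j [<- Hin]]. apply in_seq in Hin. simpl. split; auto.
    apply andb_true_intro; split; apply Z.leb_le; lia.
  - destruct i as [m k]; simpl. intros [-> H]. apply andb_prop in H as [H1 H2].
    apply Z.leb_le in H1, H2. exists (Z.to_nat (k + Z.of_nat n + 1)).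
    split; [f_equal; lia | apply in_seq; lia].
Qed.

Lemma In_block2 n (i : idx2) : In i (block2 n) <-> fst (fst i) = n /\ validb (fst i) = true.
Proof.
  unfold block2. rewrite in_flat_map. destruct i as [i t]; simpl. split.
  - intros [x [Hx Hin]]. apply In_block in Hx.
    destruct Hin as [H|[H|[]]]; injection H; intros; subst; auto.
  - intros H. exists i. split; [apply In_block; auto | destruct t; simpl; auto].
Qed.

Lemma NoDup_block2 n : NoDup (block2 n).
Proof.
  unfold block2. apply NoDup_flat_map.
  - unfold block. apply NoDup_map_NoDup_ForallPairs; [|apply seq_NoDup].
    intros a b _ _ H. injection H. lia.
  - intros x. repeat constructor; simpl; [intros [H|[]]; discriminate | tauto].
  - intros x y z H1 H2.
    destruct H1 as [<-|[<-|[]]], H2 as [H2|[H2|[]]]; injection H2; auto.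
Qed.

Lemma length_block2 n : length (block2 n) = (4 * n + 4)%nat.
Proof.
  unfold block2. rewrite (flat_map_constant_length (c := 2%nat)) by reflexivity.
  unfold block. rewrite length_map, length_seq. lia.
Qed.

Definition blocks_upto (K : nat) : list idx2 := flat_map block2 (seq 0 K).

Lemma NoDup_blocks_upto K : NoDup (blocks_upto K).
Proof.
  apply NoDup_flat_map; [apply seq_NoDup | apply NoDup_block2|].
  intros x y z H1 H2. apply In_block2 in H1 as [<- _], H2 as [<- _]. reflexivity.
Qed.

Lemma In_blocks_upto K i : In i (blocks_upto K) <-> (fst (fst i) < K)%nat /\ validb (fst i) = true.
Proof.
  unfold blocks_upto. rewrite in_flat_map. split.
  - intros [x [Hx Hi]]. apply in_seq in Hx. apply In_block2 in Hi as [<- Hv]. split; auto; lia.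
  - intros [H1 H2]. exists (fst (fst i)). split; [apply in_seq; lia | apply In_block2; auto].
Qed.

Lemma blocks_upto_add K K' : blocks_upto (K + K') = blocks_upto K ++ flat_map block2 (seq K K').
Proof. unfold blocks_upto. rewrite seq_app, flat_map_app. reflexivity. Qed.

Lemma length_blocks_upto_ge K : (K <= length (blocks_upto K))%nat.
Proof.
  induction K as [|K IH]; [simpl; lia|].
  rewrite <- Nat.add_1_r, blocks_upto_add, length_app. simpl.
  rewrite app_nil_r, length_block2. lia.
Qed.

Definition basis_default : idx2 := ((0%nat, 0%Z), true).

(* The basis of [H] listed block by block; [blocks_upto (S n)] has more than
   [n] elements, and the lists [blocks_upto K] are prefixes of each other. *)
Definition enum_basis (n : nat) : idx2 := nth n (blocks_upto (S n)) basis_default.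

Lemma nth_blocks_upto n K : (n < K)%nat -> nth n (blocks_upto K) basis_default = enum_basis n.
Proof.
  intros H. unfold enum_basis.
  pose proof (length_blocks_upto_ge (S n)). pose proof (length_blocks_upto_ge K).
  destruct (Nat.le_ge_cases K (S n)).
  - replace (S n) with (K + (S n - K))%nat by lia. rewrite blocks_upto_add, app_nth1; [reflexivity | lia].
  - replace K with (S n + (K - S n))%nat by lia. rewrite blocks_upto_add, app_nth1; [reflexivity | lia].
Qed.

Lemma enum_basis_valid n : validb (fst (enum_basis n)) = true.
Proof.
  eapply In_blocks_upto, nth_In. pose proof (length_blocks_upto_ge (S n)). lia.
Qed.

Lemma enum_basis_bij j : validb (fst j) = true ->
  exists n0, enum_basis n0 = j /\ forall n, enum_basis n = j -> n = n0.
Proof.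
  intros Hv. set (K := S (fst (fst j))).
  assert (Hin : In j (blocks_upto K)) by (apply In_blocks_upto; unfold K; split; auto).
  apply (In_nth _ _ basis_default) in Hin as [n0 [Hn0 Hj]].
  assert (Hj0 : enum_basis n0 = j).
  { rewrite <- (nth_blocks_upto n0 (K + S n0)) by lia.
    rewrite blocks_upto_add, app_nth1; auto. }
  exists n0. split; auto. intros n Hn.
  set (K' := (S n + S n0)%nat). pose proof (length_blocks_upto_ge K').
  eapply NoDup_nth; [apply (NoDup_blocks_upto K') | lia | lia |].
  rewrite !nth_blocks_upto by lia. congruence.
Qed.

Definition lsum {A} (f : A -> R) (l : list A) : R := fold_right Rplus 0 (map f l).

Lemma lsum_app {A} (f : A -> R) l1 l2 : lsum f (l1 ++ l2) = lsum f l1 + lsum f l2.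
Proof. unfold lsum. induction l1; simpl; [ring|]. rewrite IHl1; ring. Qed.

Lemma lsum_flat_map {A B} (f : B -> R) (g : A -> list B) l :
  lsum f (flat_map g l) = lsum (fun x => lsum f (g x)) l.
Proof. induction l; simpl; [reflexivity|]. rewrite lsum_app, IHl. reflexivity. Qed.

Lemma lsum_le {A} (f g : A -> R) l : (forall x, In x l -> f x <= g x) -> lsum f l <= lsum g l.
Proof.
  unfold lsum; induction l as [|a l IH]; simpl; intros H; [lra|].
  pose proof (H a (or_introl eq_refl)). pose proof (IH (fun x h => H x (or_intror h))). lra.
Qed.

Lemma lsum_const {A} (f : A -> R) l c : (forall x, In x l -> f x = c) -> lsum f l = INR (length l) * c.
Proof.
  unfold lsum; induction l as [|a l IH]; cbn [length map fold_right]; intros H; [simpl; lra|].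
  rewrite S_INR, IH, (H a (or_introl eq_refl)) by (intros; apply H; simpl; auto). ring.
Qed.

Lemma lsum_scal {A} (f : A -> R) c l : lsum (fun x => c * f x) l = c * lsum f l.
Proof. unfold lsum; induction l; simpl; [ring|]. rewrite IHl; ring. Qed.

Lemma lsum_nonneg {A} (f : A -> R) l : (forall x, 0 <= f x) -> 0 <= lsum f l.
Proof. intros H. unfold lsum; induction l; simpl; [lra|]. pose proof (H a); lra. Qed.

Lemma lsum_firstn_le {A} (f : A -> R) l k : (forall x, 0 <= f x) -> lsum f (firstn k l) <= lsum f l.
Proof.
  intros H. revert k; induction l as [|a l IH]; intros [|k]; simpl; try (unfold lsum; simpl; lra).
  - pose proof (lsum_nonneg f (a :: l) H). auto.
  - unfold lsum in *; simpl. specialize (IH k). lra.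
Qed.

Lemma lsum_indicator {A} (dec : forall x y : A, {x = y} + {x <> y}) (l : list A) (a : A) :
  NoDup l -> In a l -> lsum (fun x => if dec x a then 1 else 0) l = 1.
Proof.
  unfold lsum. induction 1 as [|x l Hx Hl IH]; simpl; intros Hin; [contradiction|].
  destruct (dec x a) as [<-|E].
  - fold (lsum (fun y => if dec y x then 1 else 0) l).
    rewrite (lsum_const _ _ 0); [ring|]. intros y Hy. destruct (dec y x); [subst; contradiction | reflexivity].
  - destruct Hin as [H|H]; [congruence|]. rewrite IH; auto. ring.
Qed.

Lemma firstn_S_nth {A} (l : list A) n d :
  (n < length l)%nat -> firstn (S n) l = firstn n l ++ [nth n l d].
Proof.
  revert n; induction l as [|a l IH]; intros [|n] H; simpl in *; try lia; [reflexivity|].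
  rewrite <- IH by lia. reflexivity.
Qed.

Lemma sum_n_nth {A} (f : A -> R) (L : list A) d M : (M < length L)%nat ->
  sum_n (fun n => f (nth n L d)) M = lsum f (firstn (S M) L).
Proof.
  induction M as [|M IH]; intros H.
  - rewrite sum_O. destruct L; simpl in *; [lia|]. unfold lsum; simpl; ring.
  - rewrite sum_Sn, IH, (firstn_S_nth L (S M) d), lsum_app by lia.
    unfold plus, lsum at 3; simpl. ring.
Qed.

Lemma lsum_geom s a K : 0 <= s < 1 -> lsum (fun N => s ^ N) (seq a K) <= s ^ a / (1 - s).
Proof.
  intros Hs. revert a; induction K as [|K IH]; intros a; unfold lsum in *; simpl.
  - apply Rdiv_le_0_compat; [apply pow_le|]; lra.
  - specialize (IH (S a)). simpl in IH.
    replace (s ^ a / (1 - s)) with (s ^ a + s * s ^ a / (1 - s)) by (field; lra). lra.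
Qed.

Lemma sum_n_le_loc (a b : nat -> R) M :
  (forall n, (n <= M)%nat -> a n <= b n) -> sum_n a M <= sum_n b M.
Proof.
  induction M as [|M IH]; intros H; rewrite ?sum_O, ?sum_Sn; [auto|].
  unfold plus; simpl. pose proof (H (S M) ltac:(lia)). pose proof (IH (fun n h => H n ltac:(lia))). lra.
Qed.

Lemma ex_series_of_bounded_partial_sums (a : nat -> R) B :
  (forall n, 0 <= a n) -> (forall M, sum_n a M <= B) -> ex_series a.
Proof.
  intros H0 HB. destruct (ex_finite_lim_seq_incr (sum_n a) B) as [l Hl]; auto.
  - intros n. rewrite sum_Sn. pose proof (H0 (S n)). unfold plus; simpl. lra.
  - exists l. exact Hl.
Qed.

Lemma is_series_eventually_zero {K : AbsRing} {V : NormedModule K} (a : nat -> V) N0 :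
  (forall n, (N0 < n)%nat -> a n = zero) -> is_series a (sum_n a N0).
Proof.
  intros H. eapply filterlim_ext_loc; [|apply filterlim_const].
  exists N0. intros M HM. replace M with (N0 + (M - N0))%nat by lia.
  induction (M - N0)%nat as [|k IH]; [rewrite Nat.add_0_r; reflexivity|].
  rewrite Nat.add_succ_r, sum_Sn, <- IH, H by lia. symmetry. apply plus_zero_r.
Qed.

Lemma sum_n_single {G : AbelianMonoid} (a : nat -> G) N0 :
  (forall n, n <> N0 -> a n = zero) -> sum_n a N0 = a N0.
Proof.
  intros H. destruct N0 as [|N0]; [apply sum_O|]. rewrite sum_Sn.
  rewrite (sum_n_ext_loc a (fun _ => zero)) by (intros n Hn; apply H; lia).
  unfold sum_n. rewrite sum_n_m_const_zero. apply plus_zero_l.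
Qed.

Lemma is_series_single {K : AbsRing} {V : NormedModule K} (a : nat -> V) N0 :
  (forall n, n <> N0 -> a n = zero) -> is_series a (a N0).
Proof.
  intros H. rewrite <- (sum_n_single a N0 H).
  apply is_series_eventually_zero. intros n Hn. apply H. lia.
Qed.

Definition level (i : idx2) : nat := fst (fst i).

Lemma blocknorm2_lsum (w : idx2 -> C) N :
  blocknorm2 block2 w N = lsum (fun i => Cmod (w i) ^ 2) (block2 N).
Proof. reflexivity. Qed.

Lemma in_basis_valid i : in_basis block2 i -> validb (fst i) = true.
Proof. intros [N H]. apply In_block2 in H. apply H. Qed.

Definition unit_vector (n : nat) : idx2 -> C :=
  fun j => if idx2_eq_dec j (enum_basis n) then RtoC 1 else RtoC 0.

Lemma is_series_blocknorm2_unit_vector n : is_series (blocknorm2 block2 (unit_vector n)) 1.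
Proof.
  set (N0 := level (enum_basis n)).
  assert (H1 : blocknorm2 block2 (unit_vector n) N0 = 1).
  { rewrite blocknorm2_lsum. unfold lsum.
    rewrite (map_ext _ (fun i => if idx2_eq_dec i (enum_basis n) then 1 else 0))
      by (intros i; unfold unit_vector; destruct (idx2_eq_dec i (enum_basis n));
          rewrite ?Cmod_1, ?Cmod_0; ring).
    apply lsum_indicator; [apply NoDup_block2|]. apply In_block2. split; [reflexivity|].
    apply enum_basis_valid. }
  rewrite <- H1. apply is_series_single. intros N HN.
  rewrite blocknorm2_lsum, (lsum_const _ _ 0); [apply Rmult_0_r|]. intros i Hi. apply In_block2 in Hi as [Hi _].
  unfold unit_vector. destruct (idx2_eq_dec i (enum_basis n)) as [->|_].
  - exfalso. apply HN. symmetry. exact Hi.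
  - rewrite Cmod_0. ring.
Qed.

Lemma l2norm_unit_vector n : l2norm block2 (unit_vector n) = 1.
Proof. unfold l2norm. rewrite (is_series_unique _ 1 (is_series_blocknorm2_unit_vector n)). apply sqrt_1. Qed.

(* Partial sums over the enumerated basis are dominated by sums over whole
   blocks, of which there are [4 N + 4] elements at level [N]. *)
Lemma ex_series_level_bounded (G : nat -> R) (Sb : R) (a : nat -> R) :
  (forall N, 0 <= G N) -> (forall K, lsum (fun N => INR (4 * N + 4) * G N) (seq 0 K) <= Sb) ->
  (forall n, 0 <= a n <= G (level (enum_basis n))) -> ex_series a.
Proof.
  intros HG HS Ha. apply (ex_series_of_bounded_partial_sums a Sb); [apply Ha|]. intros M.
  assert (HM : (M < length (blocks_upto (S M)))%nat) by (pose proof (length_blocks_upto_ge (S M)); lia).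
  apply Rle_trans with (sum_n (fun n => G (level (nth n (blocks_upto (S M)) basis_default))) M).
  { apply sum_n_le_loc. intros n Hn. rewrite nth_blocks_upto by lia. apply Ha. }
  rewrite (sum_n_nth (fun i => G (level i))) by exact HM.
  eapply Rle_trans; [apply lsum_firstn_le; intros; apply HG|].
  unfold blocks_upto. rewrite lsum_flat_map.
  eapply Rle_trans; [|apply (HS (S M))]. right. unfold lsum. f_equal. apply map_ext_in.
  intros N _. rewrite <- length_block2. apply lsum_const.
  intros i Hi. apply In_block2 in Hi as [Hi _]. unfold level. rewrite Hi. reflexivity.
Qed.

(* [INR (4 N + 4) * (INR (S N) * q ^ N) = 4 * (INR (S N) ^ 2 * sqrt q ^ N) * sqrt q ^ N]. *)
Lemma lsum_level_weights_bounded q : 0 < q -> q < 1 ->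
  exists Sb, forall K, lsum (fun N => INR (4 * N + 4) * (INR (S N) * q ^ N)) (seq 0 K) <= Sb.
Proof.
  intros hq0 hq1. set (s := sqrt q).
  assert (Hs0 : 0 < s) by (apply sqrt_lt_R0; lra).
  assert (Hs1 : s < 1) by (unfold s; rewrite <- sqrt_1; apply sqrt_lt_1_alt; lra).
  destruct (INR_pow_mul_pow_bounded 2 s Hs0 Hs1) as [M HM].
  exists (4 * M * (1 / (1 - s))). intros K.
  apply Rle_trans with (lsum (fun N => 4 * M * s ^ N) (seq 0 K)).
  - apply lsum_le. intros N _.
    assert (Hq : q ^ N = s ^ N * s ^ N)
      by (rewrite <- Rpow_mult_distr; unfold s; rewrite sqrt_sqrt by lra; reflexivity).
    replace (INR (4 * N + 4)) with (4 * INR (S N)) by (rewrite S_INR, plus_INR, mult_INR; simpl; ring).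
    rewrite Hq. pose proof (HM N). pose proof (pow_lt s N Hs0).
    replace (4 * INR (S N) * (INR (S N) * (s ^ N * s ^ N)))
      with (4 * (INR (S N) ^ 2 * s ^ N) * s ^ N) by ring.
    apply Rmult_le_compat_r; lra.
  - rewrite lsum_scal. pose proof (HM 0%nat). simpl in H.
    apply Rmult_le_compat_l; [lra|]. apply (lsum_geom s 0 K). lra.
Qed.

Definition decays_like (q : R) (T : op idx2) (d : nat) (B : R) : Prop :=
  forall i j, validb (fst i) = true -> validb (fst j) = true ->
  Cmod (entry idx2_eq_dec T i j) <= B * q ^ level j /\
  ((level j + d < level i)%nat -> entry idx2_eq_dec T i j = RtoC 0).

Definition column (T : op idx2) (n : nat) : idx2 -> C :=
  fun i => entry idx2_eq_dec T i (enum_basis n).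

Section TraceClassCriterion.
Variables (q : R) (T : op idx2) (d : nat) (B : R).
Hypotheses (hq0 : 0 < q) (hq1 : q < 1) (HB : 0 <= B) (HT : decays_like q T d B).

Lemma column_l2 n :
  ex_series (blocknorm2 block2 (column T n)) /\
  l2norm block2 (column T n) <= 2 * INR (S (level (enum_basis n) + d)) * (B * q ^ level (enum_basis n)).
Proof.
  set (N := level (enum_basis n)). set (N0 := (N + d)%nat). set (X := B * q ^ N).
  assert (HX : 0 <= X) by (unfold X; pose proof (pow_le q N ltac:(lra)); nra).
  assert (Hz : forall m, (N0 < m)%nat -> blocknorm2 block2 (column T n) m = zero).
  { intros m Hm. rewrite blocknorm2_lsum, (lsum_const _ _ 0); [apply Rmult_0_r|].
    intros i Hi. apply In_block2 in Hi as [Hi Hvi]. unfold column.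
    rewrite (proj2 (HT i (enum_basis n) Hvi (enum_basis_valid n))), Cmod_0 by (unfold N0, N, level in *; lia).
    ring. }
  pose proof (is_series_eventually_zero (K := R_AbsRing) (V := R_NormedModule) _ N0 Hz) as HS.
  split; [eexists; exact HS|]. unfold l2norm. rewrite (is_series_unique _ _ HS).
  rewrite <- (sqrt_pow2 (2 * INR (S N0) * X)) by (pose proof (pos_INR (S N0)); nra).
  apply sqrt_le_1_alt.
  apply Rle_trans with (sum_n (fun _ => INR (4 * N0 + 4) * X ^ 2) N0).
  - apply sum_n_le_loc. intros m Hm. rewrite blocknorm2_lsum.
    eapply Rle_trans; [apply lsum_le with (g := fun _ => X ^ 2)|].
    + intros i Hi. apply In_block2 in Hi as [_ Hvi]. unfold column.
      pose proof (proj1 (HT i (enum_basis n) Hvi (enum_basis_valid n))).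
      apply pow_incr. split; [apply Cmod_ge_0 | exact H].
    + rewrite (lsum_const _ _ (X ^ 2)), length_block2 by reflexivity.
      apply Rmult_le_compat_r; [apply pow_le; lra | apply le_INR; lia].
  - rewrite sum_n_const. replace (4 * N0 + 4)%nat with (4 * S N0)%nat by lia.
    rewrite mult_INR. right. simpl. ring.
Qed.

Lemma trace_class_of_decay : trace_class_H T.
Proof.
  exists (column T), unit_vector. split; [|split; [|split]].
  - intros n. apply column_l2.
  - intros n. eexists. apply is_series_blocknorm2_unit_vector.
  - destruct (lsum_level_weights_bounded q hq0 hq1) as [Sb HSb].
    set (c := 2 * B * (INR d + 1)). pose proof (pos_INR d).
    assert (Hc : 0 <= c) by (unfold c; nra).
    apply (ex_series_level_bounded (fun N => c * (INR (S N) * q ^ N)) (c * Sb)).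
    + intros N. pose proof (pos_INR (S N)). pose proof (pow_le q N ltac:(lra)).
      apply Rmult_le_pos; [|apply Rmult_le_pos]; lra.
    + intros K.
      apply Rle_trans with (c * lsum (fun N => INR (4 * N + 4) * (INR (S N) * q ^ N)) (seq 0 K)).
      * rewrite <- lsum_scal. apply lsum_le. intros N _. right. ring.
      * apply Rmult_le_compat_l; auto.
    + intros n. rewrite l2norm_unit_vector, Rmult_1_r.
      split; [apply sqrt_pos|]. eapply Rle_trans; [apply column_l2|].
      set (N := level (enum_basis n)).
      pose proof (pos_INR N). pose proof (pow_le q N ltac:(lra)).
      assert (INR (S (N + d)) <= (INR d + 1) * INR (S N)) by (rewrite !S_INR, plus_INR; nra).
      apply Rle_trans with (2 * ((INR d + 1) * INR (S N)) * (B * q ^ N)).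
      * apply Rmult_le_compat_r; [nra | lra].
      * right. unfold c. ring.
  - intros i j Hi Hj. apply in_basis_valid in Hi, Hj.
    destruct (enum_basis_bij j Hj) as [n0 [<- Hn0]].
    replace (entry idx2_eq_dec T i (enum_basis n0))
      with (Cmult (column T n0 i) (Cconj (unit_vector n0 (enum_basis n0)))).
    + apply (is_series_single (fun n => Cmult (column T n i) (Cconj (unit_vector n (enum_basis n0))))).
      intros n Hn. unfold unit_vector.
      destruct (idx2_eq_dec (enum_basis n0) (enum_basis n)) as [E|_].
      * exfalso. apply Hn, Hn0. congruence.
      * apply injective_projections; simpl; ring.
    + unfold column, unit_vector. destruct (idx2_eq_dec (enum_basis n0) (enum_basis n0)); [|congruence].
      apply injective_projections; simpl; ring.
Qed.

End TraceClassCriterion.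

Lemma comm_FH_piH_decay q : 0 < q -> q < 1 -> forall x,
  exists d B, 0 <= B /\ decays_like q (op_comm FH (piH q x)) d B.
Proof.
  intros hq0 hq1 x. destruct (rho_minus_decay q hq0 hq1 x) as [d [B [HB Hdec]]].
  exists d, (2 * B). split; [lra|]. intros [i t] [j t'] Hi Hj. unfold level; cbn [fst] in *.
  rewrite comm_FH_piH, entry_scal, (entry_tensor _ _ _ idx_eq_dec Bool.bool_dec), entry_F2_gamma2.
  destruct (Hdec i j Hi Hj) as [Hle Hout].
  set (g := if Bool.bool_dec (negb t') t then RtoC (if t' then 1 else -1) else RtoC 0).
  assert (Hg : Cmod g <= 1).
  { unfold g. destruct (Bool.bool_dec (negb t') t); rewrite ?Cmod_0; [|lra].
    destruct t'; rewrite Cmod_R; [rewrite Rabs_R1 | rewrite Rabs_m1]; lra. }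
  split.
  - rewrite !Cmod_mult, Cmod_R, Rabs_right by lra.
    pose proof (Cmod_ge_0 (entry idx_eq_dec (rho_minus q x) i j)). pose proof (Cmod_ge_0 g). nra.
  - intros Hlt. rewrite (Hout Hlt). apply injective_projections; simpl; ring.
Qed.

Theorem mainTheorem8 (q : R) (hq0 : 0 < q) (hq1 : q < 1) :
  (forall x : AS2, rapid_decay (rho_minus q x)) /\
  (forall (x : AS2) (i j : idx2), validb (fst i) = true -> validb (fst j) = true ->
     entry idx2_eq_dec (op_comm FH (piH q x)) i j =
     entry idx2_eq_dec
       (op_scal (RtoC 2) (op_tensor (rho_minus q x) (op_comp F2 gamma2))) i j) /\
  (forall x : AS2, trace_class_H (op_comm FH (piH q x))) /\
  finite_summable q.
Proof.
  split; [|split; [|split]].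
  - apply rapid_decay_rho_minus; assumption.
  - intros x i j _ _. apply comm_FH_piH.
  - intros x. destruct (comm_FH_piH_decay q hq0 hq1 x) as [d [B [HB HT]]].
    exact (trace_class_of_decay q _ d B hq0 hq1 HB HT).
  - exists 0%nat. intros [|x [|y xs]] Hlen; try discriminate.
    destruct (comm_FH_piH_decay q hq0 hq1 x) as [d [B [HB HT]]].
    apply (trace_class_of_decay q _ d B hq0 hq1 HB).
    intros i j Hi Hj. unfold comm_prod; simpl. rewrite entry_comp_id. apply HT; assumption.
Qed.
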